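(* Let $\mathcal H$ be a finite-dimensional Hilbert space and $\rho$ a density matrix on $\mathcal H$. Let $\sigma^{(1)}=\{|\psi_i\rangle\langle\psi_i|\}$ be the set of rank-1 projectors onto an orthonormal eigenbasis $\{|\psi_i\rangle\}$ of $\rho$, and let $\sigma^{(2)}$ be any exhaustive exclusive set of rank-1 projectors. Then $\mathcal S=\{\rho,\sigma^{(1)},\sigma^{(2)}\}$ is medium consistent, and there are no exhaustive exclusive sets of projectors $\tau^{(1)},\dots,\tau^{(n)}$ such that $\mathcal S'=\{\rho,\sigma^{(1)},\tau^{(1)},\dots,\tau^{(n)},\sigma^{(2)}\}$ is a nontrivial consistent extension of $\mathcal S$.
   Context: A set of projectors $\sigma=\{P_\alpha\}_{\alpha=1,\dots,m}$ on $\mathcal H$ is exhaustive and exclusive if $\sum_\alpha P_\alpha=\mathbb 1$ and $P_\alpha P_\beta=\delta_{\alpha\beta}P_\alpha$. A family of histories $\{\rho,\sigma^{(1)},\dots,\sigma^{(n)}\}$ consists of an initial density matrix $\rho$ and exhaustive exclusive sets $\sigma^{(j)}=\{P^{(j)}_{\alpha_j}\}$ (Heisenberg-picture projectors at successive times $t_1<\dots<t_n$). A history is a tuple $\alpha=(\alpha_1,\dots,\alpha_n)$ with history operator $C_\alpha=P^{(1)}_{\alpha_1}\cdots P^{(n)}_{\alpha_n}$, probability $Pr(\alpha)=\mathrm{Tr}\{C_\alpha^\dagger\rho C_\alpha\}$ and coherence function $D(\alpha;\beta)=\mathrm{Tr}\{C_\alpha^\dagger\rho C_\beta\}$. The family is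 (medium) consistent if $D(\alpha;\beta)=\delta_{\alpha\beta}Pr(\alpha)$ for all histories $\alpha,\beta$. Given a consistent family $\mathcal S=\{\rho,\sigma^{(1)},\dots,\sigma^{(n)}\}$, a family obtained by inserting additional exhaustive exclusive sets of projectors at intermediate times (before the last set $\sigma^{(n)}$) is a consistent extension of $\mathcal S$ if it is consistent; the extension is trivial if for every history $(\alpha_1,\dots,\alpha_n)$ of $\mathcal S$ there is at most one history of the extended family with nonzero probability that agrees with it at the original times, and nontrivial otherwise. *)

From mathcomp Require Import all_boot all_order all_algebra.
From mathcomp Require Import algC.
Set Implicit Arguments. Unset Strict Implicit. Unset Printing Implicit Defensive.
Import Order.TTheory GRing.Theory Num.Theory.
Local Open Scope ring_scope.

(* The Hilbert space is C^(d.+1) (nonzero finite dimension). *)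
Notation mat d := 'M[algC]_d.+1.

Definition adjm (m n : nat) (A : 'M[algC]_(m, n)) : 'M[algC]_(n, m) :=
  (map_mx Num.conj A)^T.

Definition hermitian d (A : mat d) : Prop := adjm A = A.

Definition psd d (A : mat d) : Prop :=
  forall v : 'cV[algC]_d.+1, 0 <= (adjm v *m A *m v) 0 0.

Definition density_matrix d (rho : mat d) : Prop :=
  hermitian rho /\ psd rho /\ \tr rho = 1.

Definition projector d (P : mat d) : Prop := hermitian P /\ P *m P = P.

Definition exh_excl d (s : seq (mat d)) : Prop :=
  (forall a, (a < size s)%N -> projector (nth 0 s a)) /\
  \sum_(a < size s) nth 0 s a = 1 /\
  (forall a b, (a < size s)%N -> (b < size s)%N ->
     nth 0 s a *m nth 0 s b = if a == b then nth 0 s a else 0).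

(* A family of histories {rho, sigma^(1), ..., sigma^(n)} is given by rho and
   the sequence F = [:: sigma^(1); ...; sigma^(n)] of sets of projectors. *)
Definition history d (F : seq (seq (mat d))) (a : seq nat) : Prop :=
  size a = size F /\
  forall j, (j < size F)%N -> (nth 0%N a j < size (nth [::] F j))%N.

Definition hist_op d (F : seq (seq (mat d))) (a : seq nat) : mat d :=
  \prod_(j < size F) nth 0 (nth [::] F j) (nth 0%N a j).

Definition coherence d (rho : mat d) (F : seq (seq (mat d))) (a b : seq nat)
  : algC :=
  \tr (adjm (hist_op F a) *m rho *m hist_op F b).

Definition prob d (rho : mat d) (F : seq (seq (mat d))) (a : seq nat) : algC :=
  \tr (adjm (hist_op F a) *m rho *m hist_op F a).

Definition consistent d (rho : mat d) (F : seq (seq (mat d))) : Prop :=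
  forall a b, history F a -> history F b ->
    coherence rho F a b = if a == b then prob rho F a else 0.

(* Given the extended family F' in which the original sets sit at positions
   [pos] (listed in order), the extension is nontrivial if some history of the
   original family F is the restriction of two distinct histories of F' with
   nonzero probability. *)
Definition nontrivial_ext d (rho : mat d) (F F' : seq (seq (mat d)))
  (pos : seq nat) : Prop :=
  exists a, history F a /\
  exists b1 b2, [/\ history F' b1, history F' b2 & b1 <> b2] /\
    [/\ prob rho F' b1 != 0, prob rho F' b2 != 0,
    [seq nth 0%N b1 i | i <- pos] = a & [seq nth 0%N b2 i | i <- pos] = a].

Definition consistent_nontrivial_ext d (rho : mat d) (F F' : seq (seq (mat d)))
  (pos : seq nat) : Prop :=
  consistent rho F' /\ nontrivial_ext rho F F' pos.

(* If P_j is an eigenprojection of rho, then rho P_j = lam_j P_j, so the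
   coherence of the histories (i, k) and (j, l) is a multiple of
   tr (Q_k P_i P_j Q_l) = tr (Q_l Q_k P_i P_j), which vanishes unless both
   indices agree.  In an extension, two histories that agree at the first and
   last times have history operators P X Q and P X' Q with P and Q of rank
   one; writing P = u v, both are u times a row in the one-dimensional row
   space of Q, hence proportional, C' = c C.  Consistency then
   gives 0 = D(C, C') = c Pr(C), so if Pr(C) != 0 then C' = 0: no history of
   the original family splits into two with nonzero probability. *)

From mathcomp Require Import all_boot all_order all_algebra.
From mathcomp Require Import algC.
Set Implicit Arguments. Unset Strict Implicit. Unset Printing Implicit Defensive.
Import GRing.Theory Num.Theory.
Local Open Scope ring_scope.

Section RankOne.

Variable F : fieldType.

Lemma mxrank_outer_unit n (u : 'cV[F]_n) (v : 'rV_n) :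
  v *m u = 1%:M -> \rank (u *m v) = 1%N.
Proof.
move=> vu1; apply/anti_leq; rewrite mulmx_max_rank /=.
have := mxrankM_maxl (u *m v) u; rewrite -mulmxA vu1 mulmx1; apply: leq_trans.
by have := mxrankM_maxr v u; rewrite vu1 mxrank1.
Qed.

Lemma rank1_row_proportional n (Q : 'M[F]_n) (r1 r2 : 'rV_n) :
  \rank Q = 1%N -> (r1 <= Q)%MS -> (r2 <= Q)%MS -> r1 != 0 ->
  exists c, r2 = c *: r1.
Proof.
move=> rQ r1Q r2Q r1_neq0.
have Qr1 : (Q <= r1)%MS.
  by rewrite -(mxrank_leqif_sup r1Q).2 rQ eq_sym eqn_leq rank_leq_row lt0n mxrank_eq0 r1_neq0.
have /submxP [D ->] := submx_trans r2Q Qr1.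
by exists (D 0 0); rewrite {1}[D]mx11_scalar mul_scalar_mx.
Qed.

Lemma rank1_outer m n (P : 'M[F]_(m, n)) :
  \rank P = 1%N -> exists (u : 'cV_m) (v : 'rV_n), P = u *m v.
Proof.
move=> rP; move: (col_base P) (row_base P) (mulmx_base P); rewrite rP => u v <-.
by exists u, v.
Qed.

Lemma rank1_sandwich_proportional n (P Q X1 X2 : 'M[F]_n) :
  \rank P = 1%N -> \rank Q = 1%N -> P *m X1 *m Q != 0 ->
  exists c, P *m X2 *m Q = c *: (P *m X1 *m Q).
Proof.
move=> /rank1_outer [u [v ->]] rQ.
have outerE X : u *m v *m X *m Q = u *m (v *m X *m Q) by rewrite !mulmxA.
rewrite !outerE => nz.
have r1_neq0 : v *m X1 *m Q != 0 by apply: contraNneq nz => ->; rewrite mulmx0.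
have [c ->] := rank1_row_proportional rQ (submxMl _ _) (submxMl (v *m X2) Q) r1_neq0.
by exists c; rewrite -scalemxAr.
Qed.

End RankOne.

Lemma adjmM m n p (A : 'M[algC]_(m, n)) (B : 'M[algC]_(n, p)) :
  adjm (A *m B) = adjm B *m adjm A.
Proof. by rewrite /adjm map_mxM trmx_mul. Qed.

Lemma adjmK m n (A : 'M[algC]_(m, n)) : adjm (adjm A) = A.
Proof. by apply/matrixP => i j; rewrite !mxE conjCK. Qed.

Lemma adjm_outer_hermitian n (u : 'cV[algC]_n) : adjm (u *m adjm u) = u *m adjm u.
Proof. by rewrite adjmM adjmK. Qed.

Section ColumnProjectors.

Variables (n : nat) (U : 'M[algC]_n).
Hypothesis U_unitary : adjm U *m U = 1%:M.

Definition col_projs : seq 'M[algC]_n :=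
  [seq col i U *m adjm (col i U) | i <- enum 'I_n].

Lemma size_col_projs : size col_projs = n.
Proof. by rewrite size_map size_enum_ord. Qed.

Lemma nth_col_projs (i : 'I_n) : nth 0 col_projs i = col i U *m adjm (col i U).
Proof. by rewrite (nth_map i) ?size_enum_ord // nth_ord_enum. Qed.

Lemma sum_col_projs : \sum_(i < n) col i U *m adjm (col i U) = U *m adjm U.
Proof.
apply/matrixP => a b; rewrite summxE !mxE; apply: eq_bigr => i _.
by rewrite !mxE big_ord1 !mxE.
Qed.

Lemma adjm_col_unitary (i j : 'I_n) : adjm (col i U) *m col j U = (i == j)%:R%:M.
Proof.
apply/matrixP => a b; rewrite (ord1 a) (ord1 b) !mxE.
have /matrixP/(_ i j) := U_unitary; rewrite !mxE => <-.
by apply: eq_bigr => k _; rewrite !mxE.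
Qed.

Lemma mxrank_col_proj (i : 'I_n) : \rank (col i U *m adjm (col i U)) = 1%N.
Proof. by apply: mxrank_outer_unit; rewrite adjm_col_unitary eqxx. Qed.

Lemma col_proj_mul (i j : 'I_n) :
  col i U *m adjm (col i U) *m (col j U *m adjm (col j U)) =
  if i == j then col i U *m adjm (col i U) else 0.
Proof.
rewrite mulmxA -(mulmxA (col i U)) adjm_col_unitary.
by case: eqP => [<-|_]; rewrite ?mulmx1 // mul_mx_scalar mulr0n scale0r mul0mx.
Qed.

End ColumnProjectors.

Lemma exh_excl_col_projs d (U : mat d) :
  adjm U *m U = 1%:M -> exh_excl (col_projs U).
Proof.
move=> U_unitary; rewrite /exh_excl size_col_projs; split; [|split].
- move=> a lt_a; rewrite -[a]/(val (Ordinal lt_a)) nth_col_projs.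
  by split; [exact: adjm_outer_hermitian | rewrite col_proj_mul ?eqxx].
- rewrite (eq_bigr _ (fun i _ => nth_col_projs U i)) sum_col_projs.
  exact: mulmx1C.
- move=> a b lt_a lt_b.
  rewrite -[a]/(val (Ordinal lt_a)) -[b]/(val (Ordinal lt_b)) !nth_col_projs.
  exact: col_proj_mul.
Qed.

Section Histories.

Variables (d : nat) (rho : mat d).

Lemma hist_op_pair (s1 s2 : seq (mat d)) x y :
  hist_op [:: s1; s2] [:: x; y] = nth 0 s1 x *m nth 0 s2 y.
Proof. by rewrite /hist_op !big_ord_recr big_ord0 /= mul1r mulmxE. Qed.

Lemma history_pair (s1 s2 : seq (mat d)) a :
  history [:: s1; s2] a ->
  exists i k, [/\ a = [:: i; k], (i < size s1)%N & (k < size s2)%N].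
Proof.
case=> + lt_a; case: a lt_a => [|i [|k [|]]] // lt_a _.
by exists i, k; split; [|exact: (lt_a 0%N)|exact: (lt_a 1%N)].
Qed.

Lemma consistent_eigenprojs_pair (s1 s2 : seq (mat d)) :
  exh_excl s1 -> exh_excl s2 ->
  (forall a, (a < size s1)%N -> exists lam, rho *m nth 0 s1 a = lam *: nth 0 s1 a) ->
  consistent rho [:: s1; s2].
Proof.
move=> [proj_s1 [_ excl1]] [proj_s2 [_ excl2]] eig a b.
move=> /history_pair [i [k [-> lt_i lt_k]]] /history_pair [j [l [-> lt_j lt_l]]].
case: eqP => [[<- <-] //|neq_ab].
have [lam eig_j] := eig j lt_j.
rewrite /coherence !hist_op_pair adjmM (proj1 (proj_s1 _ lt_i)) (proj1 (proj_s2 _ lt_k)).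
have -> : s2`_k *m s1`_i *m rho *m (s1`_j *m s2`_l) =
    lam *: (s2`_k *m (s1`_i *m s1`_j) *m s2`_l).
  by rewrite !mulmxA -(mulmxA _ rho) eig_j -scalemxAr -scalemxAl.
rewrite excl1 //; have [eq_ij | _] := eqVneq i j; last by rewrite mulmx0 mul0mx scaler0 mxtrace0.
have neq_lk : l != k by apply: contraPneq neq_ab => ->; rewrite eq_ij.
by rewrite mxtraceZ mxtrace_mulC mulmxA excl2 // (negbTE neq_lk) mul0mx mxtrace0 mulr0.
Qed.

Lemma history_ends (s1 s2 : seq (mat d)) taus b :
  history (s1 :: rcons taus s2) b ->
  (nth 0%N b 0 < size s1)%N /\ (nth 0%N b (size taus).+1 < size s2)%N.
Proof.
move=> [_ lt_b]; split; first exact: (lt_b 0%N).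
by have := lt_b (size taus).+1; rewrite /= size_rcons nth_rcons ltnn eqxx; apply.
Qed.

Lemma hist_op_ends (s1 s2 : seq (mat d)) taus b :
  exists X, hist_op (s1 :: rcons taus s2) b =
    nth 0 s1 (nth 0%N b 0) *m X *m nth 0 s2 (nth 0%N b (size taus).+1).
Proof.
rewrite /hist_op /= size_rcons big_ord_recl big_ord_recr /=.
eexists; rewrite -!mulmxE mulmxA; congr (_ *m _ *m _).
by rewrite nth_rcons ltnn eqxx.
Qed.

Lemma prob_eq0_of_proportional (A B : mat d) c :
  B = c *: A -> \tr (adjm A *m rho *m B) = 0 -> \tr (adjm A *m rho *m A) != 0 ->
  \tr (adjm B *m rho *m B) = 0.
Proof.
move=> -> + pA_neq0; rewrite -scalemxAr mxtraceZ => /eqP.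
rewrite mulf_eq0 (negbTE pA_neq0) orbF => /eqP ->.
by rewrite scale0r mulmx0 mxtrace0.
Qed.

Lemma no_consistent_nontrivial_ext_rank1 (F : seq (seq (mat d))) s1 taus s2 :
  (forall a, (a < size s1)%N -> \rank (nth 0 s1 a) = 1%N) ->
  (forall a, (a < size s2)%N -> \rank (nth 0 s2 a) = 1%N) ->
  ~ consistent_nontrivial_ext rho F (s1 :: rcons taus s2) [:: 0%N; (size taus).+1].
Proof.
move=> rank_s1 rank_s2 [consistent_ext [a [_ [b1 [b2 [[h1 h2 neq_b] [p1 p2 ends1 ends2]]]]]]].
have [eq_first eq_last] : nth 0%N b1 0 = nth 0%N b2 0 /\
    nth 0%N b1 (size taus).+1 = nth 0%N b2 (size taus).+1.
  by move: ends1; rewrite -ends2 => -[-> ->].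
have [lt_first lt_last] := history_ends h1.
have [X1 C1E] := hist_op_ends s1 s2 taus b1.
have [X2 C2E] := hist_op_ends s1 s2 taus b2.
rewrite -eq_first -eq_last in C2E.
have C1_neq0 : hist_op (s1 :: rcons taus s2) b1 != 0.
  by apply: contraNneq p1 => C1_eq0; rewrite /prob C1_eq0 mulmx0 mxtrace0.
rewrite C1E in C1_neq0.
have [c] := rank1_sandwich_proportional X2 (rank_s1 _ lt_first) (rank_s2 _ lt_last) C1_neq0.
rewrite -C1E -C2E => C2_prop.
have coh_eq0 := consistent_ext b1 b2 h1 h2; rewrite ifN in coh_eq0; last exact/eqP.
by move/eqP: p2; apply; apply: prob_eq0_of_proportional C2_prop coh_eq0 p1.
Qed.

End Histories.

Theorem lemma2 (d : nat) (rho : 'M[algC]_d.+1)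
  (U : 'M[algC]_d.+1) (lam : 'I_d.+1 -> algC)
  (sigma2 : seq 'M[algC]_d.+1) :
  density_matrix rho ->
  (* the columns psi_i of U form an orthonormal eigenbasis of rho *)
  adjm U *m U = 1%:M ->
  (forall i : 'I_d.+1, rho *m col i U = lam i *: col i U) ->
  exh_excl sigma2 ->
  (forall a, (a < size sigma2)%N -> \rank (nth 0 sigma2 a) = 1%N) ->
  let sigma1 := [seq col i U *m adjm (col i U) | i <- enum 'I_d.+1] in
  consistent rho [:: sigma1; sigma2] /\
  forall taus : seq (seq 'M[algC]_d.+1),
    (forall t, t \in taus -> exh_excl t) ->
    ~ consistent_nontrivial_ext rho [:: sigma1; sigma2]
        (sigma1 :: rcons taus sigma2) [:: 0%N; (size taus).+1].
Proof.
move=> _ U_unitary eig_U sigma2_ee rank_sigma2 sigma1.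
have nth_sigma1 a : (a < size sigma1)%N ->
    exists i : 'I_d.+1, nth 0 sigma1 a = col i U *m adjm (col i U).
  by rewrite size_col_projs => lt_a; exists (Ordinal lt_a); rewrite -nth_col_projs.
split.
  apply: consistent_eigenprojs_pair (exh_excl_col_projs U_unitary) sigma2_ee _.
  move=> a /nth_sigma1 [i ->]; exists (lam i).
  by rewrite mulmxA eig_U -scalemxAl.
move=> taus _; apply: no_consistent_nontrivial_ext_rank1 rank_sigma2.
by move=> a /nth_sigma1 [i ->]; exact: mxrank_col_proj U_unitary i.
Qed.
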